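(* For integers $0\le\ell\le n$, let $K_{n,\ell}$ be the number of fixed points of a uniformly random $\ell$-matching on $\{1,\dots,n\}$. If $n\to\infty$ and $\ell=\ell(n)$ satisfies $\ell/n\to\theta\in[0,1]$, then $K_{n,\ell}$ converges in distribution to a Poisson$(\theta)$ random variable; that is, for every fixed integer $k\ge0$, $$\mathbb P(K_{n,\ell}=k)\longrightarrow e^{-\theta}\frac{\theta^k}{k!}.$$
   Context: An $\ell$-matching on $\{1,\dots,n\}$ is an injection $\sigma:I\hookrightarrow\{1,\dots,n\}$ where $I\subseteq\{1,\dots,n\}$ with $|I|=\ell$; the uniform distribution is over all such pairs $(I,\sigma)$. A fixed point of $\sigma$ is an $i\in I$ with $\sigma(i)=i$. Poisson$(0)$ denotes the point mass at $0$. *)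

From HB Require Import structures.
From mathcomp Require Import all_boot all_order all_algebra.
From mathcomp Require Import all_classical all_reals all_analysis.
Set Implicit Arguments. Unset Strict Implicit. Unset Printing Implicit Defensive.
Import Order.TTheory GRing.Theory Num.Theory.

(* An l-matching on {1..n} (encoded as 'I_n) is an injection sigma : I -> 'I_n
   with I a subset of 'I_n of size l. We encode the pair (I, sigma) as a
   partial function f : 'I_n -> option 'I_n with domain I = {i | f i != None},
   injective on its domain. This is a bijective encoding of the pairs (I,sigma). *)
Definition pinj n := {ffun 'I_n -> option 'I_n}.

Definition dom n (f : pinj n) : {set 'I_n} := [set i | f i != None].

Definition is_matching n (l : nat) (f : pinj n) : bool :=
  (#|dom f| == l) &&
  [forall i, forall j, ((f i != None) && (f i == f j)) ==> (i == j)].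

Definition matchings n l : {set pinj n} := [set f | is_matching l f].

Definition nfix n (f : pinj n) : nat := #|[set i | f i == Some i]|.

Definition prob_fix (R : realType) n l k : R :=
  (#|[set f in matchings n l | nfix f == k]|%:R / #|matchings n l|%:R)%R.

(* Write K for the number of fixed points of a uniform l-matching on n points.
   Counting the matchings that fix a given j-set gives the factorial moments
   E[K^_j] = l^_j / n^_j exactly, and the inclusion-exclusion identity
   [m = k] = sum_i (-1)^i/(k! i!) m^_(i+k) turns them into
   P(K = k) = 1/k! sum_i (-1)^i/i! l^_(i+k)/n^_(i+k).
   Each ratio l^_j/n^_j lies in [0, 1] and tends to theta^j, so Tannery's
   theorem (dominated convergence for series) lets the limit pass through the
   sum, giving theta^k/k! sum_i (-theta)^i/i! = e^(-theta) theta^k/k!. *)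

From HB Require Import structures.
From mathcomp Require Import all_classical all_reals all_analysis.
From mathcomp Require Import all_boot all_order all_algebra.
From mathcomp Require Import ring lra zify.
Import Order.TTheory GRing.Theory Num.Theory numFieldNormedType.Exports.

Set Implicit Arguments. Unset Strict Implicit. Unset Printing Implicit Defensive.

Section PartialInjections.
Variables A B : finType.
Implicit Types (f : {ffun A -> option B}) (D : {set A}).

Definition pdom f : {set A} := [set a | f a != None].

Definition pinjectiveb f : bool :=
  [forall i, forall j, ((f i != None) && (f i == f j)) ==> (i == j)].

Definition partial_injections r : {set {ffun A -> option B}} :=
  [set f | (#|pdom f| == r) && pinjectiveb f].

Lemma pinjectiveP f :
  reflect (forall i j, f i != None -> f i = f j -> i = j) (pinjectiveb f).
Proof.
apply: (iffP forallP) => [injf i j fi fij | injf i].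
  by have /forallP/(_ j) := injf i; rewrite fi fij eqxx => /eqP.
by apply/forallP => j; apply/implyP => /andP[fi /eqP fij]; apply/eqP/injf.
Qed.

Definition pextend D (g : {ffun {x | x \in D} -> option B}) : {ffun A -> option B} :=
  [ffun a => obind g (insub a)].

Lemma pextend_inj D : injective (@pextend D).
Proof.
by move=> g1 g2 /ffunP eqg; apply/ffunP => y; have := eqg (val y); rewrite !ffunE valK.
Qed.

Lemma card_pinj_dom D :
  #|[set f | (pdom f == D) && pinjectiveb f]| = #|B| ^_ #|D|.
Proof.
have card_Some : #|[pred o : option B | o != None]| = #|B|.
  by rewrite cardC1 card_option.
(* Restrictions of f to D are counted as injections into the non-[None] values
   of [option B], so that building them needs no default element of B. *)
rewrite -card_Some -(card_sig (mem D)) -card_inj_ffuns_on.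
suff -> : [set f | (pdom f == D) && pinjectiveb f] =
    @pextend D @: [set g in ffun_on [pred o | o != None] | injectiveb g].
  by rewrite card_imset //; exact: pextend_inj.
apply/setP => f; rewrite inE; apply/idP/imsetP.
- case/andP => /eqP domf /pinjectiveP injf.
  have fD a : (f a != None) = (a \in D) by rewrite -domf inE.
  exists [ffun y => f (val y)].
    rewrite inE; apply/andP; split.
      by apply/ffun_onP => y; rewrite ffunE inE fD (valP y).
    apply/injectiveP => y1 y2; rewrite !ffunE => fy.
    by apply/val_inj/(injf _ _ _ fy); rewrite fD (valP y1).
  apply/ffunP => a; rewrite !ffunE; case: insubP => [y _ <- | aD] /=.
    by rewrite ffunE.
  by apply/eqP; rewrite -[_ == _]negbK fD.
- case=> g; rewrite inE => /andP[/ffun_onP gS /injectiveP injg] ->.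
  apply/andP; split.
    apply/eqP/setP => a; rewrite inE ffunE.
    by case: insubP => [y -> _ | /negbTE ->] //=; exact: gS.
  apply/pinjectiveP => i j; rewrite !ffunE.
  case: insubP => [yi _ <- | _] //=; case: insubP => [yj _ <- | _] /= gi.
    by move/injg ->.
  by move=> gN; rewrite gN in gi.
Qed.

Lemma card_partial_injections r :
  #|partial_injections r| = 'C(#|A|, r) * #|B| ^_ r.
Proof.
rewrite -card_draws -sum1_card.
rewrite (partition_big pdom (fun D => #|D| == r)) /=; last first.
  by move=> f; rewrite inE => /andP[].
rewrite (eq_bigr (fun _ => #|B| ^_ r)) ?sum_nat_const ?cardsE // => D /eqP Dr.
rewrite -[in RHS]Dr -card_pinj_dom -[RHS]sum1_card; apply: eq_bigl => f.
by rewrite !inE; have [->|] := eqVneq (pdom f) D; rewrite ?Dr ?eqxx ?andbF ?andbT.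
Qed.

End PartialInjections.

Definition fixed_points (A : finType) (f : {ffun A -> option A}) : {set A} :=
  [set a | f a == Some a].

Section FixingSet.
Variables (A : finType) (S : {set A}).
Local Notation A' := {x : A | x \notin S}.

Definition extend_fixing (g : {ffun A' -> option A'}) : {ffun A -> option A} :=
  [ffun a => if insub a is Some t then omap val (g t) else Some a].

Lemma extend_fixing_inj : injective extend_fixing.
Proof.
move=> g1 g2 /ffunP eqg; apply/ffunP => t.
have := eqg (val t); rewrite !ffunE valK.
by case: (g1 t) => [?|]; case: (g2 t) => [?|] // [/val_inj ->].
Qed.

Lemma card_pdom_extend_fixing g :
  #|pdom (extend_fixing g)| = #|S| + #|pdom g|.
Proof.
have -> : pdom (extend_fixing g) = S :|: val @: pdom g.
  apply/setP => a; rewrite !inE ffunE; case: insubP => [t tS ta | ].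
    by rewrite (negbTE tS) -ta (mem_imset _ _ val_inj) inE; case: (g t).
  by rewrite negbK => ->.
rewrite cardsU card_imset; last exact: val_inj.
suff -> : #|S :&: val @: pdom g| = 0 by rewrite subn0.
apply: eq_card0 => a; rewrite !inE; apply/andP => -[aS /imsetP[t _ ta]].
by move: (valP t); rewrite -ta aS.
Qed.

Lemma pinjective_extend_fixing g :
  pinjectiveb (extend_fixing g) = pinjectiveb g.
Proof.
apply/pinjectiveP/pinjectiveP => injg.
  move=> t1 t2 gt1 gt12; apply/val_inj/injg; rewrite !ffunE !valK //=.
    by case: (g t1) gt1.
  by rewrite gt12.
move=> a1 a2; rewrite !ffunE.
case: insubP => [t1 _ <- | /negPn a1S]; case: insubP => [t2 _ <- | /negPn a2S] //=.
- case E1: (g t1) => [u1|] //; case E2: (g t2) => [u2|] // _ [/val_inj u12].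
  by congr val; apply: injg; rewrite ?E1 // E2 u12.
- by case: (g t1) => [u|] //= _ [ua2]; move: (valP u); rewrite /= ua2 a2S.
- by case: (g t2) => [u|] //= _ [ua1]; move: (valP u); rewrite /= -ua1 a1S.
- by move=> _ [].
Qed.

Lemma card_pinj_fixing l : #|S| <= l ->
  #|[set f in partial_injections A A l | S \subset fixed_points f]|
   = 'C(#|A| - #|S|, l - #|S|) * (#|A| - #|S|) ^_ (l - #|S|).
Proof.
move=> Sl.
have cardA' : #|{: A'}| = #|A| - #|S|.
  by rewrite card_sig -(cardC S) addKn; apply: eq_card => a; rewrite !inE.
rewrite -cardA' -card_partial_injections.
suff -> : [set f in partial_injections A A l | S \subset fixed_points f] =
    extend_fixing @: partial_injections A' A' (l - #|S|).
  by rewrite card_imset //; exact: extend_fixing_inj.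
apply/setP => f; rewrite !inE; apply/idP/imsetP.
- case/andP => /andP[/eqP domf injf] /subsetP fixS.
  have fS s : s \in S -> f s = Some s by move/fixS; rewrite inE => /eqP.
  pose g : {ffun A' -> option A'} := [ffun t => obind insub (f (val t))].
  have fg : extend_fixing g = f.
    apply/ffunP => a; rewrite !ffunE; case: insubP => [t tS ta | /negPn /fS -> //].
    rewrite -ta ffunE; case fa: (f (val t)) => [b|] //=.
    case: insubP => [u _ <- // | /negPn bS].
    have bt : b = val t by apply: (pinjectiveP _ injf); rewrite fS // fa.
    by move: tS; rewrite -ta -bt bS.
  exists g => //; rewrite inE -pinjective_extend_fixing fg injf andbT.
  by rewrite -(eqn_add2l #|S|) -card_pdom_extend_fixing fg domf subnKC.
- case=> g; rewrite inE => /andP[/eqP domg injg] ->.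
  rewrite card_pdom_extend_fixing domg subnKC // eqxx pinjective_extend_fixing injg /=.
  apply/subsetP => s sS; rewrite inE ffunE.
  by case: insubP => [t tS _ | //]; rewrite sS in tS.
Qed.

End FixingSet.

Lemma sum_indicator (T : finType) (M : {set T}) (P : pred T) :
  \sum_(x in M) (P x : nat) = #|[set x in M | P x]|.
Proof.
rewrite -sum1_card big_mkcond [RHS]big_mkcond /=; apply: eq_bigr => x _.
by rewrite inE; case: (x \in M); case: (P x).
Qed.

Lemma ffactnD n a b : n ^_ (a + b) = n ^_ a * (n - a) ^_ b.
Proof.
elim: b => [|b IHb]; first by rewrite addn0 muln1.
by rewrite addnS !ffactnSr IHb mulnA subnDA.
Qed.

Lemma mul_bin_sub n l j : j <= l -> 'C(n, l) * 'C(l, j) = 'C(n, j) * 'C(n - j, l - j).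
Proof.
move=> jl; apply/eqP; rewrite -(@eqn_pmul2r (j`! * (l - j)`!)) ?muln_gt0 ?fact_gt0 //.
rewrite -mulnA bin_fact // bin_ffact.
have -> : n ^_ l = n ^_ j * (n - j) ^_ (l - j) by rewrite -ffactnD subnKC.
by rewrite -!bin_ffact; apply/eqP; ring.
Qed.

Section FixedPointMoments.
Variables (A : finType) (l : nat).
Local Notation M := (partial_injections A A l).

Lemma sum_bin_fixed_points j :
  \sum_(f in M) 'C(#|fixed_points f|, j) =
  'C(#|A|, j) * (if j <= l then 'C(#|A| - j, l - j) * (#|A| - j) ^_ (l - j) else 0).
Proof.
have binE (F : {set A}) :
    'C(#|F|, j) = \sum_(S in [set S : {set A} | #|S| == j]) (S \subset F : nat).
  by rewrite -cards_draws sum_indicator; apply: eq_card => S; rewrite !inE andbC.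
under eq_bigr => f _ do rewrite binE.
rewrite exchange_big /= -card_draws -sum_nat_const; apply: eq_bigr => S.
rewrite inE => /eqP Sj; rewrite sum_indicator -Sj; case: ifP => [Sl|/negbT].
  exact: card_pinj_fixing.
rewrite -ltnNge => lS; apply: eq_card0 => f; rewrite !inE.
apply/andP => -[/andP[/eqP domf _] /subsetP fixS].
suff : #|S| <= #|pdom f| by rewrite domf leqNgt lS.
by apply/subset_leq_card/subsetP => a /fixS; rewrite !inE => /eqP ->.
Qed.

Lemma sum_ffact_fixed_points j :
  \sum_(f in M) #|fixed_points f| ^_ j * #|A| ^_ j = #|M| * l ^_ j.
Proof.
rewrite -big_distrl /=.
under eq_bigr => f _ do rewrite -bin_ffact.
rewrite -big_distrl /= sum_bin_fixed_points card_partial_injections.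
case: leqP => [jl | lj]; last by rewrite (ffact_small lj) !(muln0, mul0n).
have -> : #|A| ^_ l = #|A| ^_ j * (#|A| - j) ^_ (l - j) by rewrite -ffactnD subnKC.
rewrite -(bin_ffact l).
transitivity ('C(#|A|, l) * 'C(l, j) * (#|A| ^_ j * (#|A| - j) ^_ (l - j) * j`!)).
  by rewrite mul_bin_sub //; ring.
ring.
Qed.

End FixedPointMoments.

Local Open Scope ring_scope.

Section AlternatingSums.
Variable R : numFieldType.

Lemma sum_alt_bin m N : (m < N)%N ->
  \sum_(i < N) (-1) ^+ i * 'C(m, i)%:R = (m == 0)%:R :> R.
Proof.
move=> mN; pose F i : R := (-1) ^+ i * 'C(m, i)%:R.
have -> : \sum_(i < N) F i = \sum_(i < m.+1) F i.
  rewrite (big_ord_widen _ F mN) [RHS]big_mkcond; apply: eq_bigr => i _.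
  by case: ltnP => // mi; rewrite /F bin_small ?mulr0.
rewrite (eq_bigr (fun i : 'I_m.+1 => (-1) ^+ i *+ 'C(m, i))) => [|i _].
  by rewrite -exprD1n addNr expr0n.
exact: mulr_natr.
Qed.

Lemma eq_alt_ffact m k N : (m < N)%N ->
  (m == k)%:R = \sum_(i < N - k)
    (k`!%:R)^-1 * ((-1) ^+ i / i`!%:R) * (m ^_ (i + k))%:R :> R.
Proof.
move=> mN; have [mk | km] := ltnP m k.
  by rewrite (ltn_eqF mk) big1 // => i _; rewrite ffact_small ?mulr0 //; lia.
have fact_neq0 i : (i`!%:R : R) != 0 by rewrite pnatr_eq0 -lt0n fact_gt0.
rewrite (eq_bigr (fun i : 'I_(N - k) => 'C(m, k)%:R * ((-1) ^+ i * 'C(m - k, i)%:R))).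
  rewrite -mulr_sumr sum_alt_bin; last lia.
  have [->|mNk] := eqVneq m k; first by rewrite subnn binn mulr1.
  by rewrite (_ : (m - k == 0)%N = false) ?mulr0 //; lia.
move=> i _; rewrite addnC ffactnD -!bin_ffact !natrM.
by field; rewrite !fact_neq0.
Qed.

End AlternatingSums.

Section Matchings.
Variables n l : nat.

Lemma matchingsE : matchings n l = partial_injections 'I_n 'I_n l.
Proof. by apply/setP => f; rewrite !inE. Qed.

Lemma nfix_leq (f : pinj n) : (nfix f <= n)%N.
Proof. by rewrite -[leqRHS]card_ord max_card. Qed.

Lemma mean_ffact_nfix (R : numFieldType) j : (l <= n)%N ->
  (\sum_(f in matchings n l) ((nfix f) ^_ j)%:R) / #|matchings n l|%:R
   = (l ^_ j)%:R / (n ^_ j)%:R :> R.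
Proof.
move=> ln; have [jn | nj] := leqP j n; last first.
  rewrite big1 ?mul0r ?(ffact_small (leq_ltn_trans ln nj)) ?mul0r // => f _.
  by rewrite ffact_small // (leq_ltn_trans (nfix_leq f) nj).
have M_gt0 : (0 < #|matchings n l|)%N.
  by rewrite matchingsE card_partial_injections card_ord muln_gt0 bin_gt0 ffact_gt0 ln.
apply/eqP; rewrite eqr_div ?pnatr_eq0 -?lt0n ?ffact_gt0 // -natr_sum -!natrM eqr_nat.
have := sum_ffact_fixed_points 'I_n l j; rewrite card_ord -big_distrl /= -matchingsE => ->.
by rewrite mulnC.
Qed.

Lemma prob_fix_series (R : realType) k : (l <= n)%N ->
  prob_fix R n l k = (k`!%:R)^-1 * \sum_(i < n.+1 - k)
    (-1) ^+ i / i`!%:R * ((l ^_ (i + k))%:R / (n ^_ (i + k))%:R).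
Proof.
move=> ln; rewrite /prob_fix -sum_indicator natr_sum.
under eq_bigr => f _ do rewrite (@eq_alt_ffact R _ k n.+1 (nfix_leq f)).
rewrite exchange_big /= mulr_suml mulr_sumr; apply: eq_bigr => i _.
by rewrite -mulr_sumr -[LHS]mulrA mean_ffact_nfix // !mulrA.
Qed.

End Matchings.

Local Open Scope classical_set_scope.

Section Tannery.
Variable R : realType.

Lemma normed_series_tail (c : R ^nat) e : cvgn [normed series c] -> 0 < e ->
  \forall m \near \oo, forall K, \sum_(m <= i < K) `|c i| < e.
Proof.
move=> /cauchy_cvgP/cauchy_seriesP/(_ e) cc e0.
have [[P Q] [/= [m1 _ Pm1] [m2 _ Qm2]] PQ] := cc e0.
exists (maxn m1 m2) => // m /= mm K.
have [Km | mK] := leqP K m; first by rewrite big_geq.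
have := PQ (m, K); rewrite /= ger0_norm ?sumr_ge0 //; apply.
by split; [apply: Pm1 | apply: Qm2] => /=; lia.
Qed.

Lemma tannery (c y : R ^nat) (x : nat -> R ^nat) (N : nat -> nat) (L : R) :
  cvgn [normed series c] -> (forall n i, `|x n i| <= 1) ->
  (forall i, x ^~ i @ \oo --> y i) -> N @ \oo --> \oo ->
  series (fun i => c i * y i) @ \oo --> L ->
  (fun n => \sum_(i < N n) c i * x n i) @ \oo --> L.
Proof.
move=> cc x_le1 xy Noo cyL; apply/cvgrPdist_lt => e e0.
have e3 : 0 < e / 3 by rewrite divr_gt0.
near \oo => m.
have tail_m K : \sum_(m <= i < K) `|c i| < e / 3.
  by move: K; near: m; exact: normed_series_tail.
have Lm : `|L - series (fun i => c i * y i) m| < e / 3.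
  by near: m; exact: cvgr_dist_lt.
have head_cvg : (fun n => \sum_(i < m) c i * x n i) @ \oo -->
    series (fun i => c i * y i) m.
  rewrite /series /= big_mkord; apply: cvg_big => [|i _].
    exact: add_continuous.
  exact: cvgMl_tmp (xy i).
near=> n.
have mN : (m <= N n)%N by near: n; exact: Noo _ (nbhs_infty_ge m).
have head_n : `|series (fun i => c i * y i) m - \sum_(i < m) c i * x n i| < e / 3.
  by near: n; exact: cvgr_dist_lt.
have tail_n : `|\sum_(m <= i < N n) c i * x n i| < e / 3.
  apply: le_lt_trans (ler_norm_sum _ _ _) (le_lt_trans _ (tail_m (N n))).
  by apply: ler_sum => i _; rewrite normrM ler_piMr.
rewrite -(big_mkord xpredT (fun i => c i * x n i)) (@big_cat_nat _ _ _ m) //= big_mkord.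
set S := series _ m in Lm head_n; set A := \sum_(i < m) _ in head_n *.
set B := \sum_(m <= i < N n) _ in tail_n *.
have -> : L - (A + B) = (L - S) + (S - A) - B by ring.
have := ler_normB (L - S + (S - A)) B; have := ler_normD (L - S) (S - A).
lra.
Unshelve. all: by end_near. Qed.

End Tannery.

Lemma cvg_natr_inv (R : realType) : (fun n : nat => (n%:R : R)^-1) @ \oo --> 0.
Proof. by rewrite -cvg_shiftS; exact: cvg_harmonic. Qed.

Lemma natr_ffact (R : pzRingType) m j : (m ^_ j)%:R = \prod_(i < j) (m%:R - i%:R) :> R.
Proof.
elim: j => [|j IHj]; first by rewrite big_ord0.
rewrite ffactnSr natrM IHj big_ord_recr /=.
have [jm | mj] := leqP j m; first by rewrite natrB.
by rewrite -IHj ffact_small // !mul0r.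
Qed.

Section FallingFactorialRatio.
Variables (R : realType) (l : nat -> nat) (theta : R).
Hypothesis l_ratio : (fun n => (l n)%:R / n%:R : R) @ \oo --> theta.

Lemma shifted_ratio_cvg i :
  (fun n => ((l n)%:R - i%:R) / (n%:R - i%:R) : R) @ \oo --> theta.
Proof.
have ratioE : {near \oo, (fun n => ((l n)%:R / n%:R - i%:R * n%:R^-1) /
    (1 - i%:R * n%:R^-1) : R) =1 (fun n => ((l n)%:R - i%:R) / (n%:R - i%:R))}.
  near=> n => /=.
  have i_lt_n : (i < n)%N by near: n; exact: nbhs_infty_gt.
  have n_neq0 : (n%:R : R) != 0 by rewrite pnatr_eq0 -lt0n (leq_ltn_trans _ i_lt_n).
  have ni_neq0 : (n%:R - i%:R : R) != 0 by rewrite subr_eq0 eqr_nat gtn_eqF.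
  by field; rewrite ni_neq0 n_neq0.
apply: cvg_trans (near_eq_cvg ratioE) _.
have -> : theta = (theta - i%:R * 0) / (1 - i%:R * 0) by rewrite mulr0 !subr0 divr1.
apply: cvgM; first by apply: cvgB => //; apply: cvgMl_tmp; exact: cvg_natr_inv.
apply: cvgV; first by rewrite mulr0 subr0 oner_neq0.
by apply: cvgB; [exact: cvg_cst | apply: cvgMl_tmp; exact: cvg_natr_inv].
Unshelve. all: by end_near. Qed.

Lemma ffact_ratio_cvg j :
  (fun n => ((l n) ^_ j)%:R / (n ^_ j)%:R : R) @ \oo --> theta ^+ j.
Proof.
under eq_cvg do rewrite !natr_ffact -prodf_div.
rewrite -[j in theta ^+ j]card_ord -prodr_const.
by apply: cvg_big => [|i _]; [exact: mul_continuous | exact: shifted_ratio_cvg].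
Qed.

End FallingFactorialRatio.

Lemma ffact_ratio_le1 (R : numFieldType) m n j : (m <= n)%N ->
  `|(m ^_ j)%:R / (n ^_ j)%:R : R| <= 1.
Proof.
move=> mn; have le_ffact : (m ^_ j <= n ^_ j)%N.
  by rewrite !ffact_prod; apply: leq_prod => i _; exact: leq_sub2r.
rewrite ger0_norm ?divr_ge0 //; have [->|n_gt0] := posnP (n ^_ j).
  by rewrite invr0 mulr0.
by rewrite ler_pdivrMr ?ltr0n // mul1r ler_nat.
Qed.

Theorem mainTheorem9 (R : realType) (l : nat -> nat) (theta : R) :
  (forall n, (l n <= n)%N) ->
  0 <= theta <= 1 ->
  (fun n : nat => ((l n)%:R / n%:R : R)) @ \oo --> theta ->
  forall k : nat,
    (fun n : nat => prob_fix R n (l n) k) @ \oo -->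
      expR (- theta) * theta ^+ k / (k`!)%:R.
Proof.
(* The bound [0 <= theta <= 1] is implied by the other hypotheses. *)
move=> l_le _ l_ratio k.
rewrite (funext (fun n => prob_fix_series R k (l_le n))).
have -> : expR (- theta) * theta ^+ k / k`!%:R =
    k`!%:R^-1 * (theta ^+ k * expR (- theta)) by rewrite mulrC [_ * theta ^+ k]mulrC.
apply: cvgMl_tmp.
apply: (@tannery _ (exp_coeff (-1)) (fun i => theta ^+ (i + k))
  (fun n i => ((l n) ^_ (i + k))%:R / (n ^_ (i + k))%:R) (fun n => n.+1 - k)%N).
- by rewrite normed_series_exp_coeff; exact: is_cvg_series_exp_coeff.
- by move=> n i; exact: ffact_ratio_le1.
- by move=> i; exact: ffact_ratio_cvg.
- exact: cvg_comp (cvg_addnl 1) (cvg_subnr k).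
- have -> : series (fun i => exp_coeff (-1) i * theta ^+ (i + k)) =
      (fun N => theta ^+ k * series (exp_coeff (- theta)) N).
    apply/funext => N; rewrite /series /= mulr_sumr; apply: eq_bigr => i _.
    by rewrite /exp_coeff /= exprD (exprNn theta); ring.
  by apply: cvgMl_tmp; exact: is_cvg_series_exp_coeff.
Qed.
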